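(* Let $X$ be a connected, finite, simple $4$-valent graph equipped with an orientation at each vertex. Then for every integer $k\geq2$, the Laplacian of $\mathrm{GC}_{2k,0}(X)$ has eigenvalue $4$ with multiplicity at least $\lceil (k-1)/2\rceil$.
   Context: The Laplacian of a graph $Y$ acts on $f\in\mathbb{C}^{V(Y)}$ by $(\Delta_Y f)(p)=\deg(p)f(p)-\sum_{q\sim p}f(q)$. An orientation at each vertex is a cyclic ordering of the four edges at each vertex. Goldberg–Coxeter construction $\mathrm{GC}_{m,0}(X)$ for $m\geq1$: in the square lattice $\mathbb{Z}[i]\subset\mathbb{C}$ let $S$ be the square with vertices $0,m,(1+i)m,im$. For each $p\in V(X)$ take a copy $\overline{\square}(p)$ of the graph whose vertices are the barycenters of the $m^2$ unit squares in $S$, adjacent when the squares share an edge (an $m\times m$ grid); the four sides of $S$ are matched with the four edges at $p$ so that the cyclic order at $p$ agrees with the counterclockwise order of the sides. For each edge $e=pq$, place $\overline{\square}(p)$ on $S$ with $e$ corresponding to the side from $m$ to $(1+i)m$ and $\overline{\square}(q)$ (preserving orientation) on the adjacent square with vertices $m,2m,(2+i)m,(1+i)m$ with $e$ corresponding to the side from $(1+i)m$ to $m$, and identify all overlapping vertices and edges; the result is the $4$-valent graph $\mathrm{GC}_{m,0}(X)$. *)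

From HB Require Import structures.
From mathcomp Require Import all_boot all_order all_algebra all_field.
Set Implicit Arguments. Unset Strict Implicit. Unset Printing Implicit Defensive.
Import Order.TTheory GRing.Theory Num.Theory.

(* An orientation at each vertex (cyclic ordering of the 4 edges at p, which,
   the graph being simple, are in bijection with the neighbours of p) is
   represented by a labelling [nb p : 'I_4 -> V] listing the neighbours of p
   in that cyclic (counterclockwise) order. *)
Definition is_orientation (V : finType) (adj : rel V) (nb : V -> 'I_4 -> V) :=
  forall p, injective (nb p) /\ (forall q, adj p q = (q \in codom (nb p))).

(* The unit cells of the m x m square S = [0,m]^2 are indexed by (a,b),
   0 <= a,b < m (cell [a,a+1] x [b,b+1]).  Sides of S in counterclockwise
   order: 0 = bottom (0 -> m), 1 = right (m -> (1+i)m), 2 = top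
   ((1+i)m -> im), 3 = left (im -> 0).  [side_cell m s t] is the t-th cell
   (0 <= t < m) adjacent to side s, counted along the counterclockwise
   direction of that side. *)
Definition side_cell (m : nat) (s : 'I_4) (t : nat) : nat * nat :=
  match val s with
  | 0 => (t, 0)
  | 1 => (m.-1, t)
  | 2 => (m.-1 - t, m.-1)
  | _ => (0, m.-1 - t)
  end.

(* Vertex (p,a,b): cell (a,b) of the
   copy of the m x m grid attached to p.  Edge nb p s is matched with side s
   of p's square.  Adjacency: grid adjacency inside a square, and, for every
   edge e = pq (e = side s at p, side s' at q), gluing q's square along the
   side corresponding to e (with p's side of e as the right side from m to
   (1+i)m and q's side as the left side from (1+i)m to m of the neighbouring
   square): the t-th cell along side s of p becomes adjacent to the
   (m-1-t)-th cell along side s' of q. *)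
Definition GC_adj (V : finType) (nb : V -> 'I_4 -> V) (m : nat) :
    rel (V * 'I_m * 'I_m) :=
  fun x y =>
    let p := x.1.1 in let a : nat := x.1.2 in let b : nat := x.2 in
    let q := y.1.1 in let c : nat := y.1.2 in let d : nat := y.2 in
    (p == q) &&
      (((a == c) && ((b == d.+1) || (d == b.+1))) ||
       ((b == d) && ((a == c.+1) || (c == a.+1))))
    || [exists s : 'I_4, exists s' : 'I_4, exists t : 'I_m,
          [&& nb p s == q, nb q s' == p,
              side_cell m s t == (a, b) &
              side_cell m s' (m.-1 - t) == (c, d)]].

Definition deg (T : finType) (e : rel T) (x : T) : nat := #|[set y | e x y]|.

Local Open Scope ring_scope.
Definition laplacian_mx (T : finType) (e : rel T) : 'M[algC]_#|T| :=
  \matrix_(i, j) ((if i == j then (deg e (enum_val i))%:R else 0)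
                  - (e (enum_val i) (enum_val j))%:R).

Arguments GC_adj {V} nb m.

From HB Require Import structures.
From mathcomp Require Import all_boot all_order all_algebra all_field.
From mathcomp Require Import zify ring.
Import Order.TTheory GRing.Theory Num.Theory.

(* For even m and j : nat put d_j z = [m | z - j] - [m | z + j] and
     F_j (a, b) = (-1)^b d_j (a + b + 1) + (-1)^a d_j (a - b)   on Z^2.
   The values of F_j at the four lattice neighbours of any point sum to 0, so
   F_j is an eigenfunction of eigenvalue 4 of the lattice Laplacian.  F_j is
   m-periodic and invariant under the quarter turn (a, b) |-> (m - 1 - b, a)
   of the square [0, m]^2; hence it takes the same values along every side of
   the square read counterclockwise, and just outside the t-th cell of a side
   it takes its value on the (m - 1 - t)-th cell of a side.  Copying F_j into
   every square of GC_{m,0}(X) therefore gives a function whose neighbour sums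
   are those of F_j, however the squares are glued: an eigenvector of
   eigenvalue 4.  For m = 2k and j = 2r + 1 with r < ceil((k - 1)/2), the
   values at the cells (2r', 0) of one square form an identity matrix, so these
   eigenvectors are independent. *)

Local Open Scope ring_scope.

Lemma laplacian_eigenrow (T : finType) (e : rel T) (f : T -> algC) (l : algC) :
  symmetric e ->
  (forall x, (deg e x)%:R * f x - \sum_(y | e x y) f y = l * f x) ->
  \row_i f (enum_val i) *m laplacian_mx e = l *: \row_i f (enum_val i).
Proof.
move=> e_sym f_eigen; apply/rowP => c; rewrite !mxE.
under eq_bigr do rewrite !mxE mulrBr.
rewrite sumrB -f_eigen; congr (_ - _).
  rewrite (bigD1 c) //= eqxx big1 ?addr0 1?mulrC // => i /negbTE ->.
  by rewrite mulr0.
rewrite (reindex enum_rank) /=; last exact/onW_bij/enum_rank_bij.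
rewrite (bigID (e (enum_val c))) /= [X in _ + X]big1 ?addr0; last first.
  by move=> y; rewrite enum_rankK e_sym => /negbTE ->; rewrite mulr0.
by apply: eq_bigr => y; rewrite enum_rankK e_sym => ->; rewrite mulr1.
Qed.

Section LatticeEigenfunction.

Context {R : comUnitRingType}.
Variables m j : nat.
Hypothesis m_even : ~~ odd m.

Definition altz (z : int) : R := (-1) ^ z.

Lemma altzD x y : altz (x + y) = altz x * altz y.
Proof. by rewrite /altz exprzDr // unitrN1. Qed.

Lemma altzN x : altz (- x) = altz x.
Proof. by rewrite /altz -exprz_inv invrN1. Qed.

Lemma altz1 : altz 1 = -1.
Proof. by rewrite /altz expr1z. Qed.

Lemma altzS x : altz (x + 1) = - altz x.
Proof. by rewrite altzD altz1 mulrN1. Qed.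

Lemma altzB1 x : altz (x - 1) = - altz x.
Proof. by rewrite altzD altzN altz1 mulrN1. Qed.

Lemma altz_even (n : nat) : ~~ odd n -> altz n = 1.
Proof.
by move=> n_even; rewrite /altz -exprnP -signr_odd (negbTE n_even).
Qed.

Definition pm_indicator (z : int) : R :=
  ((m%:Z %| z - j%:Z)%Z)%:R - ((m%:Z %| z + j%:Z)%Z)%:R.

Lemma pm_indicatorN z : pm_indicator (- z) = - pm_indicator z.
Proof.
rewrite /pm_indicator.
have -> : - z - j%:Z = - (z + j%:Z) by ring.
have -> : - z + j%:Z = - (z - j%:Z) by ring.
by rewrite !rpredN opprB.
Qed.

Lemma pm_indicatorDm z : pm_indicator (z + m%:Z) = pm_indicator z.
Proof.
by rewrite /pm_indicator (addrAC z) (addrAC z m%:Z) !(rpredDr _ (dvdzz _)).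
Qed.

Definition eigenfun (z : int * int) : R :=
  altz z.2 * pm_indicator (z.1 + z.2 + 1) + altz z.1 * pm_indicator (z.1 - z.2).

(* Direction i leaves the square [0, m]^2 through its side i of [side_cell]. *)
Definition lattice_step (i : 'I_4) (z : int * int) : int * int :=
  match val i with
  | 0 => (z.1, z.2 - 1)
  | 1 => (z.1 + 1, z.2)
  | 2 => (z.1, z.2 + 1)
  | _ => (z.1 - 1, z.2)
  end.

Lemma eigenfun_harmonic z : \sum_(i < 4) eigenfun (lattice_step i z) = 0.
Proof.
rewrite !big_ord_recl big_ord0 /eigenfun /lattice_step /= !altzS !altzB1.
case: z => a b /=.
have -> : a + (b - 1) + 1 = a + b + 1 - 1 by ring.
have -> : a + 1 + b + 1 = a + b + 1 + 1 by ring.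
have -> : a + (b + 1) + 1 = a + b + 1 + 1 by ring.
have -> : a - 1 + b + 1 = a + b + 1 - 1 by ring.
have -> : a - (b - 1) = a - b + 1 by ring.
have -> : a + 1 - b = a - b + 1 by ring.
have -> : a - (b + 1) = a - b - 1 by ring.
have -> : a - 1 - b = a - b - 1 by ring.
ring.
Qed.

Lemma eigenfun_periodic a b : eigenfun (a, b + m%:Z) = eigenfun (a, b).
Proof.
rewrite /eigenfun /= altzD altz_even // mulr1.
have -> : a + (b + m%:Z) + 1 = a + b + 1 + m%:Z by ring.
have -> : a - (b + m%:Z) = a - b - m%:Z by ring.
by rewrite pm_indicatorDm -(pm_indicatorDm (a - b - m%:Z)) subrK.
Qed.

Lemma eigenfun_quarter_turn a b : eigenfun (m%:Z - 1 - b, a) = eigenfun (a, b).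
Proof.
rewrite /eigenfun /=.
have -> : m%:Z - 1 - b + a + 1 = a - b + m%:Z by ring.
have -> : m%:Z - 1 - b - a = - (a + b + 1) + m%:Z by ring.
rewrite !pm_indicatorDm pm_indicatorN !altzD altz_even // !altzN altz1.
ring.
Qed.

Lemma eigenfun_half_turn a b :
  eigenfun (m%:Z - 1 - a, m%:Z - 1 - b) = eigenfun (a, b).
Proof. by rewrite eigenfun_quarter_turn eigenfun_quarter_turn. Qed.

Lemma eigenfun_side {s t c d} : (t < m)%N -> side_cell m s t = (c, d) ->
  eigenfun (c%:Z, d%:Z) = eigenfun (t%:Z, 0).
Proof.
move=> t_lt_m; case: s => [[|[|[|s]]] _] /= [<- <-] //.
- rewrite -[RHS]eigenfun_quarter_turn; congr (eigenfun (_, _)); lia.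
- rewrite -[RHS]eigenfun_half_turn; congr (eigenfun (_, _)); lia.
- rewrite -eigenfun_quarter_turn; congr (eigenfun (_, _)); lia.
Qed.

Lemma eigenfun_below a : eigenfun (a, -1) = eigenfun (m%:Z - 1 - a, 0).
Proof.
rewrite -[LHS]eigenfun_half_turn -(eigenfun_periodic _ 0).
by congr (eigenfun (_, _)); ring.
Qed.

Lemma eigenfun_across {s t c d} : (t < m)%N -> side_cell m s t = (c, d) ->
  eigenfun (lattice_step s (c%:Z, d%:Z)) = eigenfun (m%:Z - 1 - t%:Z, 0).
Proof.
move=> t_lt_m.
case: s => [[|[|[|s]]] s_lt4] /= [<- <-]; rewrite /lattice_step /=.
- by rewrite eigenfun_below.
- rewrite -eigenfun_below -[RHS]eigenfun_quarter_turn.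
  congr (eigenfun (_, _)); lia.
- rewrite -[RHS]eigenfun_periodic; congr (eigenfun (_, _)); lia.
- rewrite -[RHS]eigenfun_periodic -[RHS]eigenfun_quarter_turn.
  congr (eigenfun (_, _)); lia.
Qed.

End LatticeEigenfunction.

Lemma dvdz_small (m : nat) (z : int) : (`|z| < m)%N -> (m%:Z %| z)%Z = (z == 0).
Proof.
move=> z_small; rewrite dvdzE.
have [-> | z_neq0] := eqVneq z 0; first exact: dvdn0.
by apply/negP => /(dvdn_leq _) /=; lia.
Qed.

Lemma eigenfun_test (R : comUnitRingType) m r r' :
  (2 * r + 1 + 2 * r' + 1 < m)%N ->
  eigenfun m (2 * r + 1) ((2 * r')%N : int, 0) = (r == r')%:R :> R.
Proof.
move=> rr'_small; rewrite /eigenfun /pm_indicator /=.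
rewrite {1}/altz expr0z mul1r altz_even; last by rewrite mul2n odd_double.
rewrite !dvdz_small; try lia.
by case: eqP; case: eqP; case: eqP; case: eqP; case: eqP => /=; try lia;
  rewrite ?mulr1n ?mulr0n => *; ring.
Qed.

Local Close Scope ring_scope.

Section GoldbergCoxeter.

Variables (V : finType) (adj : rel V) (nb : V -> 'I_4 -> V).
Hypotheses (adj_sym : symmetric adj) (adj_irr : irreflexive adj).
Hypothesis nb_ori : is_orientation adj nb.

Definition back_side (p : V) (s : 'I_4) : 'I_4 :=
  odflt ord0 [pick s' | nb (nb p s) s' == p].

Lemma nb_back_side p s : nb (nb p s) (back_side p s) = p.
Proof.
rewrite /back_side; case: pickP => [s' /eqP // | no_back].
have : adj (nb p s) p by rewrite adj_sym (proj2 (nb_ori p)) codom_f.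
rewrite (proj2 (nb_ori _)) => /codomP [s' back].
by move: (no_back s'); rewrite -back eqxx.
Qed.

Lemma back_side_eq {p s s'} : nb (nb p s) s' = p -> back_side p s = s'.
Proof.
by move=> back; apply: (proj1 (nb_ori (nb p s))); rewrite back nb_back_side.
Qed.

Lemma nb_neq p s : nb p s != p.
Proof.
apply/eqP => nb_loop; have := adj_irr p.
by rewrite -[X in adj _ X]nb_loop (proj2 (nb_ori p)) codom_f.
Qed.

Variable n : nat.
Local Notation cell := (V * 'I_n.+1 * 'I_n.+1)%type.
Local Notation GC := (GC_adj nb n.+1).

Lemma side_cell_le s t : t <= n ->
  ((side_cell n.+1 s t).1 <= n) && ((side_cell n.+1 s t).2 <= n).
Proof. by case: s => [[|[|[|s]]] _] /=; lia. Qed.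

(* The shared edge runs in opposite directions along the two glued sides. *)
Definition across (p : V) (s : 'I_4) (t : nat) : cell :=
  (nb p s, inord (side_cell n.+1 (back_side p s) (n - t)).1,
           inord (side_cell n.+1 (back_side p s) (n - t)).2).

Lemma across_val p s t :
  ((across p s t).1.2 : nat, (across p s t).2 : nat)
    = side_cell n.+1 (back_side p s) (n - t).
Proof.
have /andP [le1 le2] := @side_cell_le (back_side p s) (n - t) (leq_subr t n).
by rewrite /= !inordK //; case: side_cell.
Qed.

Lemma GC_adj_across p (a b : 'I_n.+1) s t : t <= n ->
  side_cell n.+1 s t = (a : nat, b : nat) -> GC (p, a, b) (across p s t).
Proof.
move=> t_le x_side; have := across_val p s t.
have : (across p s t).1.1 = nb p s by [].
case: (across p s t) => [[q c] d] /= -> across_side.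
apply/orP; right; apply/existsP; exists s.
apply/existsP; exists (back_side p s); apply/existsP; exists (Ordinal (t_le : t < n.+1)).
by rewrite nb_back_side x_side /= across_side !eqxx.
Qed.

Definition gc_step (x : cell) (i : 'I_4) : cell :=
  let p := x.1.1 in let a : nat := x.1.2 in let b : nat := x.2 in
  match val i with
  | 0 => if 0 < b then (p, x.1.2, inord b.-1) else across p i a
  | 1 => if a < n then (p, inord a.+1, x.2) else across p i b
  | 2 => if b < n then (p, x.1.2, inord b.+1) else across p i (n - a)
  | _ => if 0 < a then (p, inord a.-1, x.2) else across p i (n - b)
  end.

Lemma GC_adj_gc_step x i : GC x (gc_step x i).
Proof.
case: x => [[p a] b]; have a_lt := ltn_ord a; have b_lt := ltn_ord b.
case: i => [[|[|[|[|i]]]] i_lt] //; rewrite /gc_step /=;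
  case: ifP => inside; try by apply/orP; left; rewrite eqxx /= inordK; lia.
all: apply: GC_adj_across => /=; [lia | congr (_, _); lia].
Qed.

Lemma gc_step_side {p} {a b t : 'I_n.+1} {s} :
  side_cell n.+1 s t = (a : nat, b : nat) -> gc_step (p, a, b) s = across p s t.
Proof.
have := ltn_ord t; case: s => [[|[|[|[|s]]]] s_lt] //= t_lt [a_t b_t];
  rewrite /gc_step /=; (case: ifP; first lia) => _; congr across; lia.
Qed.

Lemma GC_adj_gc_stepP x y : GC x y -> exists i, y = gc_step x i.
Proof.
case: x => [[p a] b]; case: y => [[q c] d].
have a_lt := ltn_ord a; have b_lt := ltn_ord b.
have c_lt := ltn_ord c; have d_lt := ltn_ord d.
rewrite /GC_adj /=; case/orP => [/andP [/eqP <-] | ].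
  case/orP => /andP [/eqP ac /orP [/eqP bd | /eqP bd]];
    [exists (@Ordinal 4 0 isT) | exists (@Ordinal 4 2 isT)
    | exists (@Ordinal 4 3 isT) | exists (@Ordinal 4 1 isT)];
    rewrite /gc_step /=; case: ifP => inside; try lia;
    by congr (_, _, _); apply/val_inj; rewrite /= ?inordK; lia.
case/existsP => s /existsP [s' /existsP [t]].
case/and4P => /eqP <- /eqP back /eqP x_side.
rewrite -(back_side_eq back) => /eqP y_side {back}; exists s.
by rewrite (gc_step_side x_side) /across y_side /= !inord_val.
Qed.

Lemma gc_step_inj x : injective (gc_step x).
Proof.
have nb_inj p := proj1 (nb_ori p).
have nb_loop p s : (nb p s == p) = false by apply: negbTE; apply: nb_neq.
case: x => [[p a] b]; have a_lt := ltn_ord a; have b_lt := ltn_ord b.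
case=> [[|[|[|[|i]]]] i_lt] // [[|[|[|[|i']]]] i'_lt] //;
  try (by move=> _; apply: val_inj); rewrite /gc_step /=;
  case: ifP => inside; case: ifP => inside' => same;
  have := congr1 (fun y => y.1.1) same; have := congr1 (fun y => val y.1.2) same;
  have := congr1 (fun y => val y.2) same => /=;
  try (by move=> _ _ /esym /eqP; rewrite nb_loop);
  try (by move=> _ _ /eqP; rewrite nb_loop);
  try (by move=> _ _ /nb_inj /(congr1 val));
  rewrite ?inordK; lia.
Qed.

Lemma GC_adj_sym : symmetric GC.
Proof.
suff GC_sym x y : GC x y -> GC y x by move=> x y; apply/idP/idP; apply: GC_sym.
case: x => [[p a] b]; case: y => [[q c] d] /=; rewrite /GC_adj /=.
case/orP => [/andP [/eqP <- grid] | ].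
  by apply/orP; left; rewrite eqxx /=; lia.
case/existsP => s /existsP [s' /existsP [t /and4P [q_nb p_nb x_side y_side]]].
apply/orP; right; apply/existsP; exists s'; apply/existsP; exists s.
apply/existsP; exists (rev_ord t); have t_lt := ltn_ord t.
by rewrite q_nb p_nb /= subSS y_side subKn // x_side.
Qed.

Lemma GC_adj_set x : [set y | GC x y] = [set gc_step x i | i in 'I_4].
Proof.
apply/setP => y; rewrite inE; apply/idP/imsetP.
  by case/GC_adj_gc_stepP => i ->; exists i.
by case=> i _ ->; apply: GC_adj_gc_step.
Qed.

Lemma deg_GC x : deg GC x = 4.
Proof.
by rewrite /deg GC_adj_set card_imset ?card_ord //; apply: gc_step_inj.
Qed.

Local Open Scope ring_scope.

Definition gc_eigenfun (j : nat) (x : cell) : algC :=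
  eigenfun n.+1 j ((x.1.2 : nat)%:Z, (x.2 : nat)%:Z).

Hypothesis m_even : ~~ odd n.+1.

Lemma gc_eigenfun_across j p (a b : 'I_n.+1) s t : (t <= n)%N ->
  side_cell n.+1 s t = (a : nat, b : nat) ->
  gc_eigenfun j (across p s t) = eigenfun n.+1 j (lattice_step s (a%:Z, b%:Z)).
Proof.
move=> t_le x_side; rewrite (eigenfun_across _ _ m_even _ x_side) //.
have across_side := esym (across_val p s t).
rewrite /gc_eigenfun (eigenfun_side _ _ m_even _ across_side); last lia.
by congr (eigenfun _ _ (_, _)); lia.
Qed.

Lemma gc_eigenfun_step j x i :
  gc_eigenfun j (gc_step x i)
    = eigenfun n.+1 j (lattice_step i ((x.1.2 : nat)%:Z, (x.2 : nat)%:Z)).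
Proof.
case: x => [[p a] b]; have a_lt := ltn_ord a; have b_lt := ltn_ord b.
case: i => [[|[|[|[|i]]]] i_lt] //; rewrite /gc_step /=; case: ifP => inside.
all: try by rewrite /gc_eigenfun /lattice_step /= inordK;
  [congr (eigenfun _ _ (_, _)); lia | lia].
all: by apply: gc_eigenfun_across => /=; [lia | congr (_, _); lia].
Qed.

Lemma gc_eigenfun_nbhd_sum j x : \sum_(y | GC x y) gc_eigenfun j y = 0.
Proof.
have -> : \sum_(y | GC x y) gc_eigenfun j y
          = \sum_(y in [set y | GC x y]) gc_eigenfun j y.
  by apply: eq_bigl => y; rewrite inE.
rewrite GC_adj_set big_imset => [|i i' _ _ /gc_step_inj //] /=.
under eq_bigr do rewrite gc_eigenfun_step.
exact: eigenfun_harmonic.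
Qed.

Lemma gc_eigenrow j :
  \row_i gc_eigenfun j (enum_val i) *m laplacian_mx GC
    = 4%:R *: \row_i gc_eigenfun j (enum_val i).
Proof.
apply: laplacian_eigenrow GC_adj_sym _ => x.
by rewrite deg_GC gc_eigenfun_nbhd_sum subr0.
Qed.

Lemma GC_eigenspace4_rank (p0 : V) (R : nat) : (4 * R <= n.+1)%N ->
  (R <= \rank (eigenspace (laplacian_mx GC) 4%:R))%N.
Proof.
move=> R_small.
pose M : 'M_(R, #|{: cell}|) :=
  \matrix_(r < R) \row_c gc_eigenfun (2 * r + 1)%N (enum_val c).
have M_eigen : (M <= eigenspace (laplacian_mx GC) 4%:R)%MS.
  apply/eigenspaceP/row_matrixP => r.
  by rewrite row_mul linearZ /= rowK gc_eigenrow.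
pose test (r : 'I_R) : cell := (p0, inord (2 * r)%N, inord 0).
have M_test : M *m \matrix_(c, r) (c == enum_rank (test r))%:R = 1%:M.
  apply/matrixP => r r'; rewrite !mxE (bigD1 (enum_rank (test r'))) //=.
  rewrite big1 => [|c /negbTE c_neq]; last by rewrite !mxE c_neq mulr0.
  have r_lt := ltn_ord r; have r'_lt := ltn_ord r'.
  rewrite !mxE eqxx mulr1 enum_rankK /gc_eigenfun /= !inordK ?addr0;
    rewrite ?eigenfun_test //; lia.
have /eqP M_rank : row_free M by apply/row_freeP; eexists; exact: M_test.
by rewrite -{1}M_rank; apply: mxrankS.
Qed.

End GoldbergCoxeter.

Theorem theorem1p5 (V : finType) (adj : rel V) (nb : V -> 'I_4 -> V) :
  0 < #|V| ->
  symmetric adj -> irreflexive adj ->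
  (forall x y : V, connect adj x y) ->
  (forall p : V, #|[set q | adj p q]| = 4) ->
  is_orientation adj nb ->
  forall k : nat, 2 <= k ->
  uphalf (k - 1) <=
    \rank (eigenspace (laplacian_mx (GC_adj nb (2 * k))) (4%:R : algC)).
Proof.
move=> /card_gt0P [p0 _] adj_sym adj_irr _ _ nb_ori k k_ge2.
have m_succ : 2 * k = (2 * k).-1.+1 by lia.
rewrite m_succ.
apply: (@GC_eigenspace4_rank _ _ nb adj_sym adj_irr nb_ori _ _ p0).
  by rewrite -m_succ mul2n odd_double.
rewrite -m_succ uphalf_half; lia.
Qed.
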